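(* Let $n\ge 2$, $p>n+1$, and let $h_1,h_2$ be $C^2$ functions on $\{x'\in\mathbb{R}^{n-1}:|x'|<1\}$ satisfying $h_1(0')=h_2(0')=0$, $D_{x'}h_1(0')=D_{x'}h_2(0')=0$, and, for some constants $\kappa_1,\kappa_2>0$, $$\kappa_1 I_{n-1}\le D^2h_1(x')\le\kappa_2 I_{n-1},\qquad \kappa_1 I_{n-1}\le -D^2h_2(x')\le\kappa_2 I_{n-1}\quad\text{for } 0\le|x'|<1.$$ Let $\delta\in(0,p-n-1)$ and $\gamma\in\big(0,\frac{p-n-1-\delta}{p-1}\big)$, and set $v(x)=(|x'|^2+(2+\delta)x_n^2)^{\gamma/2}$. Then there exists $\mu\in(0,1/2)$ depending only on $n,p,\delta,\gamma,\kappa_1,\kappa_2$ and the modulus of continuity of $D^2h_1$ and $D^2h_2$ at $x'=0$, such that for every $\varepsilon\in(0,\mu^2/\kappa_2)$, $$-\operatorname{div}(|Dv|^{p-2}Dv)>0\ \text{ in }\Omega_{\mu/\kappa_2}\setminus\Omega_{\varepsilon/\mu},\qquad \frac{\partial v}{\partial\nu}>0\ \text{ on }(\Gamma_+\cup\Gamma_-)\cap\overline{\Omega}_{\mu/\kappa_2}.$$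
   Context: Points of $\mathbb{R}^n$ are written $x=(x',x_n)$ with $x'\in\mathbb{R}^{n-1}$. For $0<r\le 1$, $\Omega_r:=\{(x',x_n): |x'|<r,\ -\frac{\varepsilon}{2}+h_2(x')<x_n<\frac{\varepsilon}{2}+h_1(x')\}$. $\Gamma_+=\{x_n=\frac{\varepsilon}{2}+h_1(x'),\ |x'|<1\}$ and $\Gamma_-=\{x_n=-\frac{\varepsilon}{2}+h_2(x'),\ |x'|<1\}$. $\nu$ is the unit normal on $\Gamma_+$ pointing upwards (i.e. $\nu=(-D_{x'}h_1,1)/\sqrt{1+|D_{x'}h_1|^2}$) and on $\Gamma_-$ pointing downwards. *)

From HB Require Import structures.
From mathcomp Require Import all_boot all_order all_algebra.
From mathcomp Require Import all_classical all_reals all_analysis.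
Set Implicit Arguments. Unset Strict Implicit. Unset Printing Implicit Defensive.
Import Order.TTheory GRing.Theory Num.Theory.
Import numFieldNormedType.Exports.
Local Open Scope classical_set_scope.
Local Open Scope ring_scope.

Section Defs.
Variable R : realType.

Definition evec (k : nat) (i : 'I_k) : 'rV[R]_k := delta_mx 0 i.

Definition partial (k : nat) (f : 'rV[R]_k -> R) (i : 'I_k) (x : 'rV[R]_k) : R :=
  'D_(evec i) f x.

Definition grad (k : nat) (f : 'rV[R]_k -> R) (x : 'rV[R]_k) : 'rV[R]_k :=
  \row_i partial f i x.

Definition hessian (k : nat) (f : 'rV[R]_k -> R) (x : 'rV[R]_k) : 'M[R]_k :=
  \matrix_(i, j) partial (partial f j) i x.

Definition div (k : nat) (F : 'rV[R]_k -> 'rV[R]_k) (x : 'rV[R]_k) : R :=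
  \sum_i partial (fun y => F y 0 i) i x.

Definition enorm (k : nat) (u : 'rV[R]_k) : R := Num.sqrt (\sum_i u 0 i ^+ 2).

Definition plap (k : nat) (p : R) (f : 'rV[R]_k -> R) (x : 'rV[R]_k) : R :=
  div (fun y => (enorm (grad f y)) `^ (p - 2) *: grad f y) x.

Definition loewner_le (k : nat) (A B : 'M[R]_k) : Prop :=
  forall xi : 'rV[R]_k, 0 <= (xi *m (B - A) *m xi^T) 0 0.

Definition unit_ball (k : nat) : set 'rV[R]_k := [set y | enorm y < 1].

Definition C2_ball (k : nat) (h : 'rV[R]_k -> R) : Prop :=
  (forall y, unit_ball y -> differentiable h y) /\
  (forall i y, unit_ball y -> differentiable (partial h i) y) /\
  (forall i j, {within @unit_ball k, continuous (partial (partial h j) i)}).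

Definition is_modulus (omega : R -> R) : Prop :=
  (forall t, 0 <= t -> 0 <= omega t) /\ omega t @[t --> 0^'+] --> 0.

Definition hess_modulus_at0 (k : nat) (h : 'rV[R]_k -> R) (omega : R -> R) : Prop :=
  forall y, unit_ball y -> forall i j,
    `|hessian h y i j - hessian h 0 i j| <= omega (enorm y).

Definition xprime (m : nat) (x : 'rV[R]_m.+1) : 'rV[R]_m :=
  \row_i x 0 (widen_ord (leqnSn m) i).
Definition xlast (m : nat) (x : 'rV[R]_m.+1) : R := x 0 ord_max.

Definition Omega (m : nat) (h1 h2 : 'rV[R]_m -> R) (eps r : R) : set 'rV[R]_m.+1 :=
  [set x | enorm (xprime x) < r /\
           - eps / 2 + h2 (xprime x) < xlast x /\ xlast x < eps / 2 + h1 (xprime x)].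

Definition Gamma_plus (m : nat) (h1 : 'rV[R]_m -> R) (eps : R) : set 'rV[R]_m.+1 :=
  [set x | xlast x = eps / 2 + h1 (xprime x) /\ enorm (xprime x) < 1].
Definition Gamma_minus (m : nat) (h2 : 'rV[R]_m -> R) (eps : R) : set 'rV[R]_m.+1 :=
  [set x | xlast x = - eps / 2 + h2 (xprime x) /\ enorm (xprime x) < 1].

(* outward normals: upward on Gamma_+, downward on Gamma_- *)
Definition nu_plus (m : nat) (h1 : 'rV[R]_m -> R) (x : 'rV[R]_m.+1) : 'rV[R]_m.+1 :=
  (Num.sqrt (1 + enorm (grad h1 (xprime x)) ^+ 2))^-1 *:
  \row_(i < m.+1) (if unlift ord_max i is Some j then - grad h1 (xprime x) 0 j else 1).
Definition nu_minus (m : nat) (h2 : 'rV[R]_m -> R) (x : 'rV[R]_m.+1) : 'rV[R]_m.+1 :=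
  (Num.sqrt (1 + enorm (grad h2 (xprime x)) ^+ 2))^-1 *:
  \row_(i < m.+1) (if unlift ord_max i is Some j then grad h2 (xprime x) 0 j else -1).

Definition dnormal (k : nat) (v : 'rV[R]_k -> R) (nu : 'rV[R]_k) (x : 'rV[R]_k) : R :=
  \sum_i grad v x 0 i * nu 0 i.

Definition vfun (m : nat) (delta gamma : R) (x : 'rV[R]_m.+1) : R :=
  (enorm (xprime x) ^+ 2 + (2 + delta) * xlast x ^+ 2) `^ (gamma / 2).

End Defs.

From HB Require Import structures.
From mathcomp Require Import all_boot all_order all_algebra.
From mathcomp Require Import all_classical all_reals all_analysis.
From mathcomp Require Import ring lra.
Import Order.TTheory GRing.Theory Num.Theory.
Import numFieldNormedType.Exports.
Local Open Scope classical_set_scope.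
Local Open Scope ring_scope.
Set Implicit Arguments. Unset Strict Implicit.

(* Write [a = 2 + delta], [Q = |x'|^2 + a x_n^2], [W = |x'|^2 + a^2 x_n^2], so that
   [v = Q^(gamma/2)]. Up to a positive factor, the p-Laplacian of [v] is a quadratic form
   in [(|x'|^2, x_n^2)] whose [|x'|^4] coefficient [(gamma - 2)(p - 1) + (p - 2) + (n - 1) + a]
   is negative by the choice of [gamma]; hence [-div(|Dv|^(p-2) Dv) > 0] in a cone
   [x_n^2 <= theta |x'|^2]. Second-order Taylor bounds give [h1, -h2 <= k2 |x'|^2], so
   [|x_n| <= eps/2 + k2 |x'|^2 <= 2 mu |x'|] in [Omega_(mu/k2) \ Omega_(eps/mu)], which lies
   in that cone once [4 mu^2 <= theta].
   On [Gamma_+], [dv/dnu] has the sign of [a x_n - x'.Dh1(x') = a eps/2 + (a h1 - x'.Dh1)(x')].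
   Near [0'] the Hessian of [h1] is almost constant, so [h1] is almost quadratic and
   [a h1 - x'.Dh1 ~ (a - 2) h1 >= 0] because [a > 2]; this is made quantitative by two mean
   value theorems along the ray [t x'] and the modulus of continuity of [D^2 h1].
   [Gamma_-] is symmetric. *)

Section RealFacts.
Variable R : realType.

Lemma powRB1 (x r : R) : 0 < x -> x `^ (r - 1) = x `^ r / x.
Proof.
move=> x0; rewrite powRB ?powRr1 ?(ltW x0) //.
by apply/implyP => _; rewrite gt_eqF.
Qed.

Lemma perturbed_gap_gt0 (a k1 e M s q0 P Q : R) : 2 < a -> 0 < s ->
  a * M * e < (a - 2) * k1 -> k1 * s <= q0 ->
  - (e * M * s) <= P - q0 -> Q - q0 <= e * M * s -> 0 < (a - 1) * P - Q.
Proof.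
move=> a_gt2 s_gt0 eM_small q0_ge P_ge Q_le.
have P_lo : (a - 1) * (q0 - e * M * s) <= (a - 1) * P by apply: ler_wpM2l; lra.
have gap : 0 < ((a - 2) * k1 - a * M * e) * s by apply: mulr_gt0 => //; lra.
have q0_lo : (a - 2) * (k1 * s) <= (a - 2) * q0 by apply: ler_wpM2l => //; lra.
have -> : (a - 1) * P - Q = (a - 1) * P - (a - 1) * (q0 - e * M * s)
  + ((a - 2) * q0 - (a - 2) * (k1 * s)) + ((a - 2) * k1 - a * M * e) * s
  + (q0 + e * M * s - Q) by ring.
lra.
Qed.

Lemma binary_form_lt0_sector (c B C : R) : 0 < c ->
  exists2 theta, 0 < theta & forall s u, 0 < s -> 0 <= u -> u <= theta * s ->
    - c * s ^+ 2 + B * (s * u) + C * u ^+ 2 < 0.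
Proof.
move=> c0; pose theta := Num.min 1 (c / (`|B| + `|C| + 1)).
have nB := normr_ge0 B; have nC := normr_ge0 C.
have theta0 : 0 < theta by rewrite lt_min ltr01 divr_gt0 //; lra.
have theta1 : theta <= 1 by rewrite ge_min lexx.
have thetaBC : theta * (`|B| + `|C| + 1) <= c.
  by rewrite -ler_pdivlMr ?ge_min ?lexx ?orbT //; lra.
exists theta => // s u s0 u0 us.
have su : s * u <= theta * s ^+ 2 by nra.
have uu : u ^+ 2 <= theta * s ^+ 2.
  have : u * u <= u * (theta * s) by rewrite ler_wpM2l.
  have : theta * s * s <= 1 * s * s by rewrite !ler_wpM2r //; lra.
  nra.
have Bsu : B * (s * u) <= `|B| * (theta * s ^+ 2).
  apply: le_trans (ler_norm _) _; rewrite normrM (ger0_norm (mulr_ge0 (ltW s0) u0)).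
  exact: ler_wpM2l.
have Cuu : C * u ^+ 2 <= `|C| * (theta * s ^+ 2).
  apply: le_trans (ler_norm _) _; rewrite normrM (ger0_norm (sqr_ge0 u)).
  exact: ler_wpM2l.
have s2 : 0 < s ^+ 2 by rewrite exprn_gt0.
have : theta * (`|B| + `|C|) * s ^+ 2 < c * s ^+ 2.
  by rewrite ltr_pM2r //; lra.
nra.
Qed.

Lemma gamma_range_coef_lt0 m (p delta gamma : R) : (m.+2)%:R < p ->
  gamma < (p - (m.+2)%:R - delta) / (p - 1) ->
  (gamma - 2) * (p - 1) + (p - 2) + (m%:R + (2 + delta)) < 0.
Proof.
rewrite -addn2 natrD => p_gt; have m_ge0 : 0 <= m%:R :> R := ler0n _ m.
by rewrite ltr_pdivlMr; lra.
Qed.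

Lemma exists_mu_small (k2 theta r0 : R) : 0 < k2 -> 0 < theta -> 0 < r0 ->
  exists mu : R, [/\ 0 < mu, mu < 1 / 2, mu <= k2, 4 * mu ^+ 2 <= theta & mu / k2 < r0].
Proof.
move=> k2_gt0 theta_gt0 r0_gt0.
have k2r0 : 0 < k2 * r0 / 2 by rewrite !mulr_gt0.
exists (Num.min (1 / 4) (Num.min k2 (Num.min theta (k2 * r0 / 2)))).
set mu := Num.min _ _.
have mu0 : 0 < mu by rewrite !lt_min k2_gt0 theta_gt0 k2r0 andbT; lra.
have [mu1 muk2 mutheta mur0] : [/\ mu <= 1 / 4, mu <= k2, mu <= theta & mu <= k2 * r0 / 2].
  by rewrite !ge_min !lexx !orbT.
split=> //; [lra | nra | by rewrite ltr_pdivrMr //; lra].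
Qed.

End RealFacts.

Section LineDerivative.
Variable R : realType.

Lemma derive_line (V : normedModType R) (f : V -> R) (z y : V) (t0 : R) :
  'D_1 (fun t : R => f (z + t *: y)) t0 = 'D_y f (z + t0 *: y) /\
  (derivable (fun t : R => f (z + t *: y)) t0 1 <-> derivable f (z + t0 *: y) y).
Proof.
have E : (fun h : R => h^-1 *: (((fun t : R => f (z + t *: y)) \o shift t0) (h *: 1)
             - f (z + t0 *: y))) =
         (fun h : R => h^-1 *: ((f \o shift (z + t0 *: y)) (h *: y) - f (z + t0 *: y))).
  apply/funext => h /=; congr (_ *: (f _ - _)).
  by rewrite scalerDl [h%:A]mulr1 addrCA.
by rewrite /derive /derivable /= E.
Qed.

Lemma derive_partialE k (f : 'rV[R]_k -> R) z y : differentiable f z ->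
  'D_y f z = \sum_i y 0 i * partial f i z.
Proof.
move=> df; rewrite deriveE // {1}(row_sum_delta y) linear_sum.
by apply: eq_bigr => i _; rewrite linearZ /partial deriveE.
Qed.

Lemma is_derive_ray k (f : 'rV[R]_k -> R) y t0 :
  differentiable f (t0 *: y) ->
  is_derive t0 (1:R) (fun t : R => f (t *: y)) (\sum_i y 0 i * partial f i (t0 *: y)).
Proof.
move=> df; have [E1 E2] := derive_line f 0 y t0.
rewrite (_ : (fun t => f (t *: y)) = fun t => f (0 + t *: y)); last first.
  by apply/funext => t; rewrite add0r.
split; first by apply/E2; rewrite add0r; exact: diff_derivable.
by rewrite E1 add0r derive_partialE.
Qed.

Lemma partial_line k (f : 'rV[R]_k -> R) i x (g : R -> R) (l : R) :
  (\forall t \near 0, g t = f (x + t *: evec R i)) -> is_derive (0:R) (1:R) g l ->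
  partial f i x = l.
Proof.
move=> gf /(near_eq_is_derive gf) [_ <-].
by have [-> _] := derive_line f x (evec R i) 0; rewrite scale0r addr0.
Qed.

Lemma MVT_cc (f df : R -> R) (a b : R) : a < b ->
  (forall x, a <= x <= b -> is_derive x 1 f (df x)) ->
  exists2 c, a < c < b & f b - f a = df c * (b - a).
Proof.
move=> ab Hd.
have cont : {within `[a, b], continuous f}.
  apply: continuous_in_subspaceT => x; rewrite inE /= in_itv => /Hd [dx _].
  by apply: differentiable_continuous; apply/derivable1_diffP.
have [c cab E] := MVT ab (fun x xab => Hd x (subset_itv_oo_cc xab)) cont.
by exists c => //; move: cab; rewrite in_itv.
Qed.

Lemma is_derive_quad (A B C x : R) :
  is_derive x 1 (fun t : R => A + B * t + C * t ^+ 2) (B + 2 * C * x).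
Proof.
have D := is_deriveD (is_deriveD (is_derive_cst A x 1) (is_deriveZ B (is_derive_id x 1)))
   (is_deriveZ C (is_deriveX 2 (is_derive_id x (1:R)))).
by apply: is_derive_eq; rewrite /GRing.scale /=; ring.
Qed.

Lemma near_quad_gt0 (A B C : R) : 0 < A ->
  \forall t \near (0:R), 0 < A + B * t + C * t ^+ 2.
Proof.
move=> A0; have [d _] := is_derive_quad A B C 0.
apply: (cvgr_gt _ (differentiable_continuous (proj1 (derivable1_diffP _ _) d))).
by rewrite mulr0 expr0n /= mulr0 !addr0.
Qed.

End LineDerivative.

Section QuadraticForm.
Variable R : realType.

Lemma scalerowE k (t : R) (y : 'rV[R]_k) i : (t *: y) 0 i = t * y 0 i.
Proof. by rewrite mxE. Qed.

Definition sqnorm k (y : 'rV[R]_k) : R := \sum_i y 0 i ^+ 2.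
Definition qform k (y : 'rV[R]_k) (A : 'M[R]_k) : R := (y *m A *m y^T) 0 0.

Lemma sqnorm_ge0 k (y : 'rV[R]_k) : 0 <= sqnorm y.
Proof. by apply: sumr_ge0 => i _; exact: sqr_ge0. Qed.

Lemma sqnorm_eq0 k (y : 'rV[R]_k) : (sqnorm y == 0) = (y == 0).
Proof.
rewrite /sqnorm psumr_eq0; last by move=> i _; exact: sqr_ge0.
apply/idP/eqP.
- move=> /allP H; apply/rowP => i; rewrite mxE; apply/eqP.
  by rewrite -sqrf_eq0; exact: (implyP (H i (mem_index_enum _))).
- by move=> ->; apply/allP => i _ /=; rewrite mxE expr0n.
Qed.

Lemma enorm_ge0 k (y : 'rV[R]_k) : 0 <= enorm y.
Proof. exact: sqrtr_ge0. Qed.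

Lemma enorm_sq k (y : 'rV[R]_k) : enorm y ^+ 2 = sqnorm y.
Proof. by rewrite /enorm sqr_sqrtr // sqnorm_ge0. Qed.

Lemma enormZ k (t : R) (y : 'rV[R]_k) : enorm (t *: y) = `|t| * enorm y.
Proof.
rewrite /enorm -sqrtr_sqr -sqrtrM ?sqr_ge0 // mulr_sumr.
by congr Num.sqrt; apply: eq_bigr => i _; rewrite scalerowE exprMn.
Qed.

Lemma qformE k (y : 'rV[R]_k) A : qform y A = \sum_i \sum_j y 0 i * A i j * y 0 j.
Proof.
rewrite /qform mxE [RHS]exchange_big; apply: eq_bigr => j _.
by rewrite !mxE mulr_suml.
Qed.

Lemma qformB k (y : 'rV[R]_k) A B : qform y (A - B) = qform y A - qform y B.
Proof. by rewrite /qform mulmxBr mulmxBl !mxE. Qed.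

Lemma qformZ k (y : 'rV[R]_k) (c : R) A : qform y (c *: A) = c * qform y A.
Proof. by rewrite /qform -scalemxAr -scalemxAl mxE. Qed.

Lemma qform_scalar k (y : 'rV[R]_k) (c : R) : qform y c%:M = c * sqnorm y.
Proof.
rewrite qformE /sqnorm mulr_sumr; apply: eq_bigr => i _.
rewrite (bigD1 i) //= big1 ?addr0; last first.
  by move=> j /negbTE ji; rewrite !mxE eq_sym ji mulr0 mul0r.
by rewrite !mxE eqxx mulr1n; ring.
Qed.

Lemma loewner_le_qform k (A B : 'M[R]_k) :
  loewner_le A B -> forall y, qform y A <= qform y B.
Proof. by move=> AB y; have := AB y; rewrite -/(qform _ _) qformB subr_ge0. Qed.

Lemma loewner_scalar_le k (c : R) (A : 'M[R]_k) :
  loewner_le c%:M A -> forall y, c * sqnorm y <= qform y A.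
Proof. by move=> /loewner_le_qform cA y; rewrite -qform_scalar. Qed.

Lemma loewner_le_scalar k (c : R) (A : 'M[R]_k) :
  loewner_le A c%:M -> forall y, qform y A <= c * sqnorm y.
Proof. by move=> /loewner_le_qform Ac y; rewrite -qform_scalar. Qed.

(* Each term is bounded through [|y_i y_j| <= (y_i^2 + y_j^2) / 2]. *)
Lemma qform_dist_le k (y : 'rV[R]_k) (A B : 'M[R]_k) (eta : R) :
  (forall i j, `|A i j - B i j| <= eta) ->
  `|qform y A - qform y B| <= eta * k%:R * sqnorm y.
Proof.
move=> AB; rewrite -qformB qformE.
apply: (le_trans (ler_norm_sum _ _ _)).
apply: (@le_trans _ _ (\sum_i \sum_(j < k) eta * ((y 0 i ^+ 2 + y 0 j ^+ 2) / 2))).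
  apply: ler_sum => i _; apply: (le_trans (ler_norm_sum _ _ _)).
  apply: ler_sum => j _.
  rewrite !mxE !normrM -[y 0 i ^+ 2]real_normK ?num_real // -[y 0 j ^+ 2]real_normK ?num_real //.
  have := AB i j; have := normr_ge0 (y 0 i); have := normr_ge0 (y 0 j).
  have := normr_ge0 (A i j - B i j); have := sqr_ge0 (`|y 0 i| - `|y 0 j|).
  move: `|y 0 i| `|y 0 j| `|A i j - B i j| => a b d ab d0 b0 a0 deta.
  have : a * d * b <= a * eta * b by apply: ler_wpM2r => //; apply: ler_wpM2l.
  have : 0 <= eta by apply: le_trans deta.
  nra.
rewrite (eq_bigr (fun i => eta * ((k%:R * y 0 i ^+ 2 + sqnorm y) / 2))); last first.
  move=> i _; rewrite -mulr_sumr -mulr_suml big_split /= sumr_const card_ord.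
  by rewrite mulr_natl.
rewrite -mulr_sumr -mulr_suml big_split /= -mulr_sumr sumr_const card_ord -mulr_natl.
by rewrite /sqnorm le_eqVlt; apply/orP; left; apply/eqP; field.
Qed.

End QuadraticForm.

Section RayTaylor.
Variable R : realType.

(* [euler_defect a h] vanishes identically when [h] is positively homogeneous of degree [a]. *)
Definition euler_defect k (a : R) (h : 'rV[R]_k -> R) (y : 'rV[R]_k) : R :=
  a * h y - \sum_i y 0 i * partial h i y.

Variables (m : nat) (h : 'rV[R]_m -> R) (sg : R).
Hypothesis h_C2 : C2_ball h.
Hypothesis h0 : h 0 = 0.
Hypothesis grad_h0 : grad h 0 = 0.
Variable y : 'rV[R]_m.
Hypothesis y_lt1 : enorm y < 1.

Local Definition phi (t : R) : R := h (t *: y).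
Local Definition phi1 (t : R) : R := \sum_i y 0 i * partial h i (t *: y).
Local Definition phi2 (t : R) : R := qform y (hessian h (t *: y)).

Lemma ray_in_ball (t : R) : 0 <= t <= 1 -> unit_ball (t *: y).
Proof.
move=> /andP[t0 t1]; rewrite /unit_ball /= enormZ ger0_norm //.
by apply: le_lt_trans y_lt1; rewrite -[leRHS]mul1r ler_wpM2r ?enorm_ge0.
Qed.

Lemma is_derive_phi (t : R) : 0 <= t <= 1 -> is_derive t 1 phi (phi1 t).
Proof. by move=> /ray_in_ball yt; apply: is_derive_ray; exact: h_C2.1. Qed.

Lemma is_derive_phi1 (t : R) : 0 <= t <= 1 -> is_derive t 1 phi1 (phi2 t).
Proof.
move=> /ray_in_ball yt.
have D i : is_derive t 1 (fun s => y 0 i * partial h i (s *: y))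
    (y 0 i * \sum_j y 0 j * partial (partial h i) j (t *: y)).
  by apply: is_deriveZ; apply: is_derive_ray; exact: h_C2.2.1.
have E : phi2 t = \sum_i y 0 i * \sum_j y 0 j * partial (partial h i) j (t *: y).
  rewrite /phi2 qformE exchange_big; apply: eq_bigr => i _.
  by rewrite mulr_sumr; apply: eq_bigr => j _; rewrite /hessian mxE; ring.
rewrite E (_ : phi1 = \sum_i (fun s => y 0 i * partial h i (s *: y))).
  exact: is_derive_sum.
by apply/funext => s; rewrite fct_sumE.
Qed.

Lemma phi1_0 : phi1 0 = 0.
Proof.
rewrite /phi1 scale0r big1 // => i _.
have : grad h 0 0 i = 0 by rewrite grad_h0 mxE.
by rewrite mxE => ->; rewrite mulr0.
Qed.

Lemma phi1_mvt (c : R) : 0 < c <= 1 -> exists2 d, 0 < d < c & phi1 c = c * phi2 d.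
Proof.
move=> /andP[c0 c1].
have [d dc E] : exists2 d, 0 < d < c & phi1 c - phi1 0 = phi2 d * (c - 0).
  apply: MVT_cc => // t /andP[t0 tc]; apply: is_derive_phi1.
  by rewrite t0 (le_trans tc c1).
by exists d => //; move: E; rewrite phi1_0 !subr0 mulrC.
Qed.

Lemma ray_taylor_le (k2 : R) : 0 <= k2 ->
  (forall z, unit_ball z -> loewner_le (sg *: hessian h z) k2%:M) ->
  sg * h y <= k2 * enorm y ^+ 2.
Proof.
move=> k2_ge0 hess_up.
have [c /andP[c0 c1] E1] := MVT_cc ltr01 is_derive_phi.
have [d /andP[d0 dc] E2] := phi1_mvt (introT andP (conj c0 (ltW c1))).
move: E1; rewrite /phi scale1r scale0r h0 !subr0 mulr1 E2 => ->.
have := loewner_le_scalar (hess_up _ (ray_in_ball (t := d) _)) y.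
rewrite qformZ -/(phi2 d) enorm_sq (ltW d0) (ltW (lt_trans dc c1)) => /(_ isT).
have := sqnorm_ge0 y; have : 0 <= k2 * sqnorm y by rewrite mulr_ge0 ?sqnorm_ge0.
nra.
Qed.

(* With [chi t = a * phi t - t * phi1 t], we have [chi 0 = 0], [chi 1 = euler_defect a h y]
   and [chi' t = (a - 1) * phi1 t - t * phi2 t], where [phi1 t ~ t * phi2 0] and
   [phi2 t ~ phi2 0 >= k1 |y|^2]. *)
Lemma euler_defect_ray_gt0 (a k1 eta : R) : 2 < a -> `|sg| = 1 ->
  loewner_le k1%:M (sg *: hessian h 0) ->
  (forall t, 0 < t <= 1 -> forall i j,
     `|hessian h (t *: y) i j - hessian h 0 i j| <= eta) ->
  a * m%:R * eta < (a - 2) * k1 -> 0 < sqnorm y ->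
  0 < sg * euler_defect a h y.
Proof.
move=> a2 sg1 hess0 near0 eta_small y0.
pose chi t := a * (sg * phi t) - t * (sg * phi1 t).
pose dchi t := (a - 1) * (sg * phi1 t) - t * (sg * phi2 t).
have Dchi (t : R) : 0 <= t <= 1 -> is_derive t 1 chi (dchi t).
  move=> tb; have D := is_deriveB (is_deriveZ a (is_deriveZ sg (is_derive_phi tb)))
    (is_deriveM (is_derive_id t 1) (is_deriveZ sg (is_derive_phi1 tb))).
  by apply: is_derive_eq; rewrite /dchi /= [_%:A]mulr1 /GRing.scale /=; ring.
have [c /andP[c0 c1] E1] := MVT_cc ltr01 Dchi.
have [d /andP[d0 dc] E2] := phi1_mvt (introT andP (conj c0 (ltW c1))).
have -> : sg * euler_defect a h y = dchi c.
  move: E1; rewrite subr0 mulr1 /chi phi1_0 /phi scale0r h0 scale1r => <-.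
  by rewrite /euler_defect /phi1 scale1r; ring.
have near_q0 (t : R) : 0 < t < 1 ->
    `|sg * phi2 t - qform y (sg *: hessian h 0)| <= eta * m%:R * sqnorm y.
  move=> /andP[t0 t1]; rewrite qformZ -mulrBr normrM sg1 mul1r.
  by apply: qform_dist_le => i j; apply: near0; rewrite t0 ltW.
have := near_q0 c (introT andP (conj c0 c1)); rewrite ler_norml => /andP[Bc1 Bc2].
have := near_q0 d (introT andP (conj d0 (lt_trans dc c1))).
rewrite ler_norml => /andP[Bd1 Bd2].
rewrite /dchi E2.
have := perturbed_gap_gt0 a2 y0 eta_small (loewner_scalar_le hess0 y) Bd1 Bc2.
move: (phi2 c) (phi2 d) => pc pd gap.
have -> : (a - 1) * (sg * (c * pd)) - c * (sg * pc) = c * ((a - 1) * (sg * pd) - sg * pc).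
  by ring.
exact: mulr_gt0.
Qed.

End RayTaylor.

Section NearOrigin.
Variable R : realType.

Lemma modulus_lt (omega : R -> R) (eta : R) : is_modulus omega -> 0 < eta ->
  exists2 r0, 0 < r0 & forall t, 0 < t -> t < r0 -> omega t < eta.
Proof.
move=> [_ omega0] eta0.
have near0 : \forall t \near 0^'+, omega t < eta := cvgr_lt _ omega0 _ eta0.
have /nbhs_ballP[e e0 He] : nbhs (0:R) (fun t => 0 < t -> omega t < eta).
  exact: near0 (at_right_proper_filter 0).
exists e => // t t0 te; apply: (He t) => //.
by rewrite /ball /= sub0r normrN gtr0_norm.
Qed.

Lemma euler_defect_ge0_near0 m (a k1 : R) (omega : R -> R) :
  2 < a -> 0 < k1 -> is_modulus omega ->
  exists2 r0, 0 < r0 & forall (h : 'rV[R]_m -> R) (sg : R), `|sg| = 1 ->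
    C2_ball h -> h 0 = 0 -> grad h 0 = 0 ->
    (forall z, unit_ball z -> loewner_le k1%:M (sg *: hessian h z)) ->
    hess_modulus_at0 h omega ->
    forall y, enorm y < 1 -> enorm y < r0 -> 0 <= sg * euler_defect a h y.
Proof.
move=> a2 k1_gt0 omega_mod.
(* [m.+1] rather than [m]: the bound must make sense for [m = 0] too. *)
pose eta := (a - 2) * k1 / (2 * a * m.+1%:R).
have eta_gt0 : 0 < eta by rewrite divr_gt0 ?mulr_gt0 //; lra.
have [r0 r0_gt0 omega_lt] := modulus_lt omega_mod eta_gt0.
exists r0 => // h sg sg1 h_C2 h0 grad_h0 hess_lo h_mod y y1 yr0.
have [y0 | y_neq0] := eqVneq y 0.
  rewrite y0 /euler_defect h0 big1 => [|i _]; last by rewrite mxE mul0r.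
  by rewrite mulr0 subrr mulr0.
have sy_gt0 : 0 < sqnorm y by rewrite lt_def sqnorm_eq0 y_neq0 sqnorm_ge0.
apply/ltW/(euler_defect_ray_gt0 h_C2 h0 grad_h0 y1 a2 sg1 (hess_lo _ _) _ _ sy_gt0).
- by rewrite /unit_ball /= /enorm /sqnorm big1 ?sqrtr0 // => i _; rewrite mxE expr0n.
- move=> t /andP[t0 t1] i j.
  have yt : 0 <= t <= 1 by rewrite (ltW t0) t1.
  apply: le_trans (h_mod _ (ray_in_ball y1 yt) i j) _; apply/ltW/omega_lt.
    by rewrite enormZ gtr0_norm // mulr_gt0 // /enorm sqrtr_gt0.
  by rewrite enormZ gtr0_norm // (le_lt_trans _ yr0) // -[leRHS]mul1r ler_wpM2r ?enorm_ge0.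
- have m_lt : m%:R < m.+1%:R :> R by rewrite ltr_nat.
  have : a * m%:R * eta <= a * m.+1%:R * eta by rewrite !ler_wpM2r ?ler_wpM2l; lra.
  have a_neq0 : a != 0 by rewrite gt_eqF //; lra.
  have -> : a * m.+1%:R * eta = (a - 2) * k1 / 2.
    by rewrite /eta; field; rewrite a_neq0 andbT addrC natr1 pnatr_eq0.
  have : 0 < (a - 2) * k1 by rewrite mulr_gt0 //; lra.
  lra.
Qed.

End NearOrigin.

Section WeightedNorm.
Variable R : realType.

Definition wsqnorm k (w : 'I_k -> R) (y : 'rV[R]_k) : R := \sum_j w j * y 0 j ^+ 2.

Definition vweight m (a : R) (j : 'I_m.+1) : R := if j == ord_max then a else 1.

Lemma evecE k (i j : 'I_k) : evec R i 0 j = (i == j)%:R.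
Proof. by rewrite /evec mxE eqxx /= eq_sym. Qed.

Lemma line_evecE k (y : 'rV[R]_k) (t : R) i j :
  (y + t *: evec R i) 0 j = y 0 j + t * (i == j)%:R.
Proof. by rewrite mxE scalerowE evecE. Qed.

Lemma wsqnorm_line k w (y : 'rV[R]_k) i (t : R) :
  wsqnorm w (y + t *: evec R i) = wsqnorm w y + (2 * w i * y 0 i) * t + w i * t ^+ 2.
Proof.
rewrite /wsqnorm (bigD1 i) //= [in RHS](bigD1 i) //= line_evecE eqxx mulr1.
rewrite (eq_bigr (fun j => w j * y 0 j ^+ 2)); first ring.
by move=> j ji; rewrite line_evecE eq_sym (negbTE ji) mulr0 addr0.
Qed.

Lemma vweight_widen m (a : R) (j : 'I_m) : vweight a (widen_ord (leqnSn m) j) = 1.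
Proof. by rewrite /vweight -val_eqE /= ltn_eqF. Qed.

Lemma unlift_max_widen m (j : 'I_m) : unlift ord_max (widen_ord (leqnSn m) j) = Some j.
Proof.
have [|j' E ->] := @unlift_some _ ord_max (widen_ord (leqnSn m) j).
  by rewrite -val_eqE /= gtn_eqF.
congr Some; apply: val_inj; move: E => /(congr1 val) /=.
by rewrite /bump leqNgt ltn_ord add0n => ->.
Qed.

Lemma wsqnorm_vweightX m (a : R) (n : nat) (y : 'rV[R]_m.+1) :
  wsqnorm (fun j => vweight a j ^+ n) y = enorm (xprime y) ^+ 2 + a ^+ n * xlast y ^+ 2.
Proof.
rewrite /wsqnorm big_ord_recr /= enorm_sq /sqnorm /xlast /vweight eqxx.
by congr (_ + _); apply: eq_bigr => j _; rewrite -/(vweight a _) vweight_widen expr1n mul1r mxE.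
Qed.

Lemma wsqnorm_vweight m (a : R) (y : 'rV[R]_m.+1) :
  wsqnorm (vweight a) y = enorm (xprime y) ^+ 2 + a * xlast y ^+ 2.
Proof. by rewrite -[a]expr1 -wsqnorm_vweightX. Qed.

Lemma sum_vweight m (a : R) : \sum_(i < m.+1) vweight a i = m%:R + a.
Proof.
rewrite big_ord_recr /= (eq_bigr (fun=> 1)) => [|j _]; last exact: vweight_widen.
by rewrite sumr_const card_ord /vweight eqxx.
Qed.

Lemma wsqnorm_vweightX_gt0 m (a : R) n (y : 'rV[R]_m.+1) : 0 < a ->
  xprime y != 0 \/ xlast y != 0 -> 0 < wsqnorm (fun j => vweight a j ^+ n) y.
Proof.
move=> a0 y_neq0; rewrite wsqnorm_vweightX enorm_sq.
have := sqnorm_ge0 (xprime y); have := sqr_ge0 (xlast y); have := exprn_gt0 n a0.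
case: y_neq0 => [y'0 | yn0].
  have : 0 < sqnorm (xprime y) by rewrite lt_def sqnorm_eq0 y'0 sqnorm_ge0.
  nra.
have : 0 < xlast y ^+ 2 by rewrite lt_def sqrf_eq0 yn0 sqr_ge0.
nra.
Qed.

End WeightedNorm.

Section PLaplacianOfV.
Variable R : realType.
Variables (m : nat) (p delta gamma : R).
Hypothesis gamma_gt0 : 0 < gamma.
Hypothesis a_gt0 : 0 < 2 + delta.

Local Notation a := (2 + delta).
Local Notation v := (vfun delta gamma).
Local Notation Q := (@wsqnorm R m.+1 (vweight a)).
Local Notation W := (@wsqnorm R m.+1 (fun j => vweight a j ^+ 2)).
Local Notation Z := (@wsqnorm R m.+1 (fun j => vweight a j ^+ 3)).
Local Notation al := ((gamma / 2 - 1) * (p - 2) + (gamma / 2 - 1)).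
Local Notation be := (2^-1 * (p - 2)).
Local Notation K := (gamma `^ (p - 2) * gamma).

Lemma vfunE x : v x = Q x `^ (gamma / 2).
Proof. by rewrite wsqnorm_vweight. Qed.

Lemma grad_vfunE x j : 0 < Q x ->
  grad v x 0 j = gamma * Q x `^ (gamma / 2 - 1) * (vweight a j * x 0 j).
Proof.
move=> Q0; rewrite mxE.
pose B := 2 * vweight a j * x 0 j.
have Q0' : 0 < Q x + B * 0 + vweight a j * 0 ^+ 2 by rewrite mulr0 expr0n /= mulr0 !addr0.
have D := is_derive1_comp (f := fun z : R => z `^ (gamma / 2))
  (g := fun t : R => Q x + B * t + vweight a j * t ^+ 2) (x := 0)
  (is_derive1_powR (gamma / 2) Q0') (is_derive_quad _ B _ 0).
apply: (partial_line (g := (fun z : R => z `^ (gamma / 2)) \o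
                           (fun t : R => Q x + B * t + vweight a j * t ^+ 2))).
  by apply: filterE => t; rewrite /= vfunE wsqnorm_line.
apply: is_derive_eq D _.
by rewrite mulr0 expr0n /= mulr0 !addr0 /B mulr0 addr0; field.
Qed.

Lemma flux_vfunE x i : 0 < Q x ->
  (enorm (grad v x) `^ (p - 2) *: grad v x) 0 i =
  K * Q x `^ al * W x `^ be * (vweight a i * x 0 i).
Proof.
move=> Q0; set e := gamma / 2 - 1.
have ge0 : 0 <= gamma * Q x `^ e by rewrite mulr_ge0 ?powR_ge0 ?(ltW gamma_gt0).
have -> : enorm (grad v x) = gamma * Q x `^ e * Num.sqrt (W x).
  rewrite /enorm (eq_bigr (fun j => (gamma * Q x `^ e) ^+ 2 *
      (vweight a j ^+ 2 * x 0 j ^+ 2))); last by move=> j _; rewrite grad_vfunE //; ring.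
  by rewrite -mulr_sumr sqrtrM ?sqr_ge0 // sqrtr_sqr ger0_norm.
rewrite scalerowE grad_vfunE // -/e powRM ?sqrtr_ge0 // powRM ?powR_ge0 ?(ltW gamma_gt0) //.
rewrite -powR12_sqrt; last by apply: sumr_ge0 => j _; rewrite mulr_ge0 ?sqr_ge0.
rewrite -!powRrM (@powRD _ (Q x) (e * (p - 2)) e); last by apply/implyP => _; rewrite gt_eqF.
ring.
Qed.

Lemma partial_flux_vfunE x i : 0 < Q x -> 0 < W x ->
  let c := vweight a i in
  partial (fun y => (enorm (grad v y) `^ (p - 2) *: grad v y) 0 i) i x =
   K * (al * Q x `^ (al - 1) * (2 * c * x 0 i) * W x `^ be * (c * x 0 i)
        + Q x `^ al * (be * W x `^ (be - 1) * (2 * c ^+ 2 * x 0 i)) * (c * x 0 i)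
        + Q x `^ al * W x `^ be * c).
Proof.
move=> Q0 W0 c.
pose qB := 2 * c * x 0 i; pose wB := 2 * c ^+ 2 * x 0 i.
have Q0' : 0 < Q x + qB * 0 + c * 0 ^+ 2 by rewrite mulr0 expr0n /= mulr0 !addr0.
have W0' : 0 < W x + wB * 0 + c ^+ 2 * 0 ^+ 2 by rewrite mulr0 expr0n /= mulr0 !addr0.
have DQ := is_derive1_comp (f := fun z : R => z `^ al)
  (g := fun t : R => Q x + qB * t + c * t ^+ 2) (x := 0)
  (is_derive1_powR al Q0') (is_derive_quad _ qB c 0).
have DW := is_derive1_comp (f := fun z : R => z `^ be)
  (g := fun t : R => W x + wB * t + c ^+ 2 * t ^+ 2) (x := 0)
  (is_derive1_powR be W0') (is_derive_quad _ wB (c ^+ 2) 0).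
have D := is_deriveM (is_deriveM (is_deriveZ K DQ) DW) (is_derive_quad (c * x 0 i) c 0 0).
apply: (partial_line (g := fun t : R => K * (Q x + qB * t + c * t ^+ 2) `^ al *
   (W x + wB * t + c ^+ 2 * t ^+ 2) `^ be * (c * x 0 i + c * t + 0 * t ^+ 2))).
  have := near_quad_gt0 qB c Q0; apply: filterS => t Qt.
  rewrite /= flux_vfunE; last by rewrite wsqnorm_line.
  rewrite !wsqnorm_line line_evecE eqxx /= mulr1 mul0r addr0 -/c.
  by rewrite /qB /wB /GRing.scale /=; ring.
apply: is_derive_eq D _.
rewrite /= /GRing.scale /= !mulr0 !expr0n /= !mulr0 !addr0 /qB /wB.
by rewrite !fctE /= /GRing.scale /= !mulr0 !expr0n /= !mulr0 !addr0; ring.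
Qed.

Lemma plap_vfunE x : 0 < Q x -> 0 < W x ->
  plap p v x = K * Q x `^ al * W x `^ be *
    (2 * al * W x / Q x + 2 * be * Z x / W x + (m%:R + a)).
Proof.
move=> Q0 W0; rewrite /plap /div.
rewrite (eq_bigr (fun i => K * Q x `^ al * W x `^ be *
   (2 * al / Q x * (vweight a i ^+ 2 * x 0 i ^+ 2)
    + 2 * be / W x * (vweight a i ^+ 3 * x 0 i ^+ 2) + vweight a i))); last first.
  move=> i _; rewrite partial_flux_vfunE // !powRB1 //.
  move: (Q x `^ al) (W x `^ be) => qa wb.
  by field; rewrite (gt_eqF Q0) (gt_eqF W0).
rewrite -mulr_sumr !big_split /= -!mulr_sumr sum_vweight.
congr (_ * _); rewrite /wsqnorm.
by field; rewrite -/(wsqnorm _ x) (gt_eqF Q0) (gt_eqF W0).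
Qed.

Lemma plap_vfun_lt0_cone :
  (gamma - 2) * (p - 1) + (p - 2) + (m%:R + a) < 0 ->
  exists2 theta, 0 < theta & forall x : 'rV[R]_m.+1, xprime x != 0 ->
    xlast x ^+ 2 <= theta * enorm (xprime x) ^+ 2 -> plap p v x < 0.
Proof.
set al2 := (gamma - 2) * (p - 1); set be2 := p - 2; set N := m%:R + a => c_lt0.
have c_gt0 : 0 < - (al2 + be2 + N) by rewrite oppr_gt0.
have [theta theta0 form_lt0] := binary_form_lt0_sector
  (2 * a ^+ 2 * al2 + be2 * (a ^+ 3 + a) + N * (a ^+ 2 + a))
  ((al2 + be2) * a ^+ 4 + N * a ^+ 3) c_gt0.
exists theta => // x x'0 cone.
have x_neq0 : xprime x != 0 \/ xlast x != 0 by left.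
have Q0 := wsqnorm_vweightX_gt0 1 a_gt0 x_neq0.
have W0 := wsqnorm_vweightX_gt0 2 a_gt0 x_neq0.
rewrite plap_vfunE // pmulr_rlt0 ?mulr_gt0 ?powR_gt0 //.
rewrite !wsqnorm_vweightX in Q0 W0 *.
have s0 : 0 < enorm (xprime x) ^+ 2.
  by rewrite enorm_sq lt_def sqnorm_eq0 x'0 sqnorm_ge0.
have := form_lt0 _ _ s0 (sqr_ge0 _) cone.
move: Q0 W0 s0 cone; rewrite expr1.
move: (enorm (xprime x) ^+ 2) (xlast x ^+ 2) => s u Q0 W0 s0 _ form.
set T := (X in X < 0) in form.
have -> : 2 * al * (s + a ^+ 2 * u) / (s + a * u) + 2 * be * (s + a ^+ 3 * u) /
    (s + a ^+ 2 * u) + N = T / ((s + a * u) * (s + a ^+ 2 * u)).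
  by rewrite /T /N /al2 /be2; field; rewrite (gt_eqF Q0) (gt_eqF W0).
by rewrite pmulr_llt0 // invr_gt0 mulr_gt0.
Qed.

Local Notation nu_scale h x := (Num.sqrt (1 + enorm (grad h (xprime x)) ^+ 2))^-1.

Lemma nu_scale_gt0 (h : 'rV[R]_m -> R) x : 0 < nu_scale h x.
Proof. by rewrite invr_gt0 sqrtr_gt0 ltr_pwDl ?sqr_ge0. Qed.

Lemma dnormal_plus_vfunE (h : 'rV[R]_m -> R) x : 0 < Q x ->
  dnormal v (nu_plus h x) x = nu_scale h x * (gamma * Q x `^ (gamma / 2 - 1)) *
    (a * xlast x - \sum_j xprime x 0 j * partial h j (xprime x)).
Proof.
move=> Q0; rewrite /dnormal big_ord_recr /= grad_vfunE // scalerowE mxE unlift_none.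
rewrite /vweight eqxx (eq_bigr (fun j : 'I_m => - (nu_scale h x *
  (gamma * Q x `^ (gamma / 2 - 1)) * (xprime x 0 j * partial h j (xprime x))))).
  by rewrite sumrN -mulr_sumr /xlast; ring.
move=> j _; rewrite grad_vfunE // scalerowE mxE unlift_max_widen.
by rewrite -/(vweight a _) vweight_widen !mxE; ring.
Qed.

Lemma dnormal_minus_vfunE (h : 'rV[R]_m -> R) x : 0 < Q x ->
  dnormal v (nu_minus h x) x = nu_scale h x * (gamma * Q x `^ (gamma / 2 - 1)) *
    (\sum_j xprime x 0 j * partial h j (xprime x) - a * xlast x).
Proof.
move=> Q0; rewrite /dnormal big_ord_recr /= grad_vfunE // scalerowE mxE unlift_none.
rewrite /vweight eqxx (eq_bigr (fun j : 'I_m => nu_scale h x *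
  (gamma * Q x `^ (gamma / 2 - 1)) * (xprime x 0 j * partial h j (xprime x)))).
  by rewrite -mulr_sumr /xlast; ring.
move=> j _; rewrite grad_vfunE // scalerowE mxE unlift_max_widen.
by rewrite -/(vweight a _) vweight_widen !mxE; ring.
Qed.

Lemma wsqnorm_vweight_gt0 (h : 'rV[R]_m -> R) x :
  a * xlast x != \sum_j xprime x 0 j * partial h j (xprime x) -> 0 < Q x.
Proof.
move=> bracket; apply: (wsqnorm_vweightX_gt0 1 a_gt0).
have [x'0|] := eqVneq (xprime x) 0; [right | by left].
apply: contraNneq bracket => xn0.
by rewrite x'0 xn0 mulr0 big1 // => j _; rewrite mxE mul0r.
Qed.

Lemma dnormal_plus_vfun_gt0 (h : 'rV[R]_m -> R) (eps : R) x : 0 < eps ->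
  xlast x = eps / 2 + h (xprime x) -> 0 <= euler_defect a h (xprime x) ->
  0 < dnormal v (nu_plus h x) x.
Proof.
move=> eps0 xn defect.
have bracket : 0 < a * xlast x - \sum_j xprime x 0 j * partial h j (xprime x).
  move: defect; rewrite /euler_defect xn.
  have : 0 < a * (eps / 2) by rewrite mulr_gt0 // divr_gt0.
  lra.
have Q0 : 0 < Q x by apply: (wsqnorm_vweight_gt0 (h := h)); rewrite -subr_eq0 gt_eqF.
by rewrite dnormal_plus_vfunE // !mulr_gt0 ?nu_scale_gt0 ?powR_gt0.
Qed.

Lemma dnormal_minus_vfun_gt0 (h : 'rV[R]_m -> R) (eps : R) x : 0 < eps ->
  xlast x = - eps / 2 + h (xprime x) -> euler_defect a h (xprime x) <= 0 ->
  0 < dnormal v (nu_minus h x) x.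
Proof.
move=> eps0 xn defect.
have bracket : 0 < \sum_j xprime x 0 j * partial h j (xprime x) - a * xlast x.
  move: defect; rewrite /euler_defect xn.
  have : 0 < a * (eps / 2) by rewrite mulr_gt0 // divr_gt0.
  rewrite mulNr; lra.
have Q0 : 0 < Q x by apply: (wsqnorm_vweight_gt0 (h := h)); rewrite eq_sym -subr_eq0 gt_eqF.
by rewrite dnormal_minus_vfunE // !mulr_gt0 ?nu_scale_gt0 ?powR_gt0.
Qed.

End PLaplacianOfV.

Section Slab.
Variable R : realType.
Variable m : nat.

Lemma continuous_enorm_xprime : continuous (fun z : 'rV[R]_m.+1 => enorm (xprime z)).
Proof.
have coord i : continuous (fun z : 'rV[R]_m.+1 => z 0 (widen_ord (leqnSn m) i)).
  exact: coord_continuous.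
rewrite (_ : (fun z => enorm (xprime z)) = Num.sqrt \o
    \sum_(i < m) (fun z : 'rV[R]_m.+1 => z 0 (widen_ord (leqnSn m) i) ^+ 2)).
  move=> z; apply: continuous_comp; last exact: sqrt_continuous.
  elim/big_ind: _ => [|f g cf cg|i _]; first exact: cst_continuous.
    by apply: continuousD; [exact: cf | exact: cg].
  exact: (continuousM (coord i z) (coord i z)).
apply/funext => z; rewrite /enorm /= fct_sumE; congr Num.sqrt.
by apply: eq_bigr => i _; rewrite mxE.
Qed.

Lemma closure_Omega_le (h1 h2 : 'rV[R]_m -> R) (eps r : R) (x : 'rV[R]_m.+1) :
  closure (Omega h1 h2 eps r) x -> enorm (xprime x) <= r.
Proof.
have closed_le_r : closed ((fun z : 'rV[R]_m.+1 => enorm (xprime z)) @^-1` [set t | t <= r]).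
  apply: preimage_closed; last exact: closed_le.
  by move=> z _; exact: continuous_enorm_xprime.
have sub : Omega h1 h2 eps r `<=` (fun z : 'rV[R]_m.+1 => enorm (xprime z)) @^-1` [set t | t <= r].
  by move=> z [/ltW].
by move=> /(closureS sub); rewrite -(closure_id _).1.
Qed.

Lemma Omega_annulus_cone (h1 h2 : 'rV[R]_m -> R) (k2 mu eps : R) x :
  0 < mu -> mu <= k2 -> 0 < eps ->
  (forall y, enorm y < 1 -> h1 y <= k2 * enorm y ^+ 2) ->
  (forall y, enorm y < 1 -> - h2 y <= k2 * enorm y ^+ 2) ->
  Omega h1 h2 eps (mu / k2) x -> ~ Omega h1 h2 eps (eps / mu) x ->
  xprime x != 0 /\ xlast x ^+ 2 <= 4 * mu ^+ 2 * enorm (xprime x) ^+ 2.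
Proof.
move=> mu0 muk2 eps0 h1_le h2_ge [r_lt [xn_gt xn_lt]] notO.
have k2_0 : 0 < k2 by apply: lt_le_trans muk2.
set r := enorm (xprime x) in r_lt notO *.
have eps_le : eps <= r * mu.
  rewrite -ler_pdivrMr // leNgt; apply/negP => r_lt'.
  by apply: notO.
have r0 : 0 < r by rewrite -(pmulr_lgt0 _ mu0) (lt_le_trans eps0 eps_le).
have r1 : r < 1 by apply: lt_le_trans r_lt _; rewrite ler_pdivrMr // mul1r.
have k2r : k2 * r ^+ 2 <= mu * r.
  rewrite expr2 mulrA; apply: ler_wpM2r; first exact: ltW.
  by rewrite mulrC -ler_pdivlMr // ltW.
split.
  apply: contraTneq r0 => x'0; rewrite /r x'0 /enorm big1 ?sqrtr0 ?ltxx // => i _.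
  by rewrite mxE expr0n.
have := h1_le _ r1; have := h2_ge _ r1; rewrite -/r => h2r h1r.
have mur : 0 <= mu * r by rewrite mulr_ge0 ?ltW.
have xn_lo : - (2 * mu * r) <= xlast x by lra.
have xn_hi : xlast x <= 2 * mu * r by lra.
have -> : 4 * mu ^+ 2 * r ^+ 2 = (2 * mu * r) ^+ 2 by ring.
nra.
Qed.

End Slab.

(* Here n = m.+1, so x' ranges over 'rV_m = R^(n-1) and x over 'rV_m.+1 = R^n. *)
Theorem lemma4p1 (R : realType) (m : nat) (p delta gamma k1 k2 : R)
    (omega : R -> R) :
  (1 <= m)%N ->
  (m.+2)%:R < p ->
  0 < k1 -> 0 < k2 ->
  0 < delta -> delta < p - (m.+2)%:R ->
  0 < gamma -> gamma < (p - (m.+2)%:R - delta) / (p - 1) ->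
  is_modulus omega ->
  exists mu : R, 0 < mu /\ mu < 1 / 2 /\ mu <= k2 /\
    forall h1 h2 : 'rV[R]_m -> R,
      C2_ball h1 -> C2_ball h2 ->
      h1 0 = 0 -> h2 0 = 0 ->
      grad h1 0 = 0 -> grad h2 0 = 0 ->
      (forall y, unit_ball y ->
         loewner_le (k1%:M) (hessian h1 y) /\ loewner_le (hessian h1 y) (k2%:M)) ->
      (forall y, unit_ball y ->
         loewner_le (k1%:M) (- hessian h2 y) /\ loewner_le (- hessian h2 y) (k2%:M)) ->
      hess_modulus_at0 h1 omega -> hess_modulus_at0 h2 omega ->
      forall eps : R, 0 < eps -> eps < mu ^+ 2 / k2 ->
        (forall x, Omega h1 h2 eps (mu / k2) x -> ~ Omega h1 h2 eps (eps / mu) x ->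
           0 < - plap p (vfun delta gamma) x) /\
        (forall x, Gamma_plus h1 eps x -> closure (Omega h1 h2 eps (mu / k2)) x ->
           0 < dnormal (vfun delta gamma) (nu_plus h1 x) x) /\
        (forall x, Gamma_minus h2 eps x -> closure (Omega h1 h2 eps (mu / k2)) x ->
           0 < dnormal (vfun delta gamma) (nu_minus h2 x) x).
Proof.
move=> _ p_gt k1_gt0 k2_gt0 delta_gt0 _ gamma_gt0 gamma_lt omega_mod.
have a_gt2 : 2 < 2 + delta by lra.
have a_gt0 : 0 < 2 + delta by lra.
have [theta theta_gt0 plap_lt0] :=
  plap_vfun_lt0_cone gamma_gt0 a_gt0 (gamma_range_coef_lt0 p_gt gamma_lt).
have [r0 r0_gt0 defect_ge0] := euler_defect_ge0_near0 m a_gt2 k1_gt0 omega_mod.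
have [mu [mu_gt0 mu_lt mu_le_k2 mu_theta mu_r0]] := exists_mu_small k2_gt0 theta_gt0 r0_gt0.
exists mu; split; [|split; [|split]] => //.
move=> h1 h2 h1_C2 h2_C2 h10 h20 Dh10 Dh20 hess1 hess2 mod1 mod2 eps eps_gt0 _.
have x'_small x : closure (Omega h1 h2 eps (mu / k2)) x -> enorm (xprime x) < r0.
  by move=> /closure_Omega_le /le_lt_trans; apply.
split; [|split].
- move=> x xO xN; rewrite oppr_gt0.
  have [||x'_neq0 cone] := Omega_annulus_cone mu_gt0 mu_le_k2 eps_gt0 _ _ xO xN.
  + move=> y y1; rewrite -[h1 y]mul1r; apply: (ray_taylor_le h1_C2 h10 Dh10 y1 (ltW k2_gt0)).
    by move=> z /hess1[_]; rewrite scale1r.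
  + move=> y y1; rewrite -mulN1r; apply: (ray_taylor_le h2_C2 h20 Dh20 y1 (ltW k2_gt0)).
    by move=> z /hess2[_]; rewrite scaleN1r.
  by apply: plap_lt0 x'_neq0 (le_trans cone _); rewrite ler_wpM2r ?sqr_ge0.
- move=> x [xn x1] /x'_small x'_lt; apply: (dnormal_plus_vfun_gt0 gamma_gt0 a_gt0 eps_gt0 xn).
  rewrite -[euler_defect _ _ _]mul1r.
  apply: defect_ge0 (normr1 _) h1_C2 h10 Dh10 _ mod1 _ x1 x'_lt.
  by move=> z /hess1[]; rewrite scale1r.
- move=> x [xn x1] /x'_small x'_lt; apply: (dnormal_minus_vfun_gt0 gamma_gt0 a_gt0 eps_gt0 xn).
  rewrite -oppr_ge0 -mulN1r.
  apply: defect_ge0 (_ : `|-1| = 1) h2_C2 h20 Dh20 _ mod2 _ x1 x'_lt.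
    by rewrite normrN normr1.
  by move=> z /hess2[]; rewrite scaleN1r.
Qed.
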